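(* Let $x$ be a stable g-matching with $x\ne x^{\max}$, let $w\in W$, and let $(c(1),a(1)),\dots,(c(k),a(k))$ be pairwise edge-disjoint essential $w$-pairs under $x$. Let $I\subseteq\{1,\dots,k\}$ and $z^I:=x_w+\sum_{i\in I}(\mathbf 1^{a(i)}-\mathbf 1^{c(i)})$. Then: (i) $z^I$ is acceptable, i.e. $C_w(z^I)=z^I$; (ii) no edge $e\in U_F^+(x)$ is interesting for $w$ under $z^I$; and (iii) for each $j\in\{1,\dots,k\}\setminus I$, the pair $(c(j),a(j))$ is essential under $z^I$ (with $z^I$ in place of $x_w$ in the definitions of legal and essential $w$-pairs).
   Context: Let $G=(V,E)$ be a finite bipartite graph with color classes $W$ and $F$; the edge joining $w\in W$ and $f\in F$ is written $wf$. Let $b\in\mathbb Z_+^E$ be capacities. For $v\in V$, $E_v$ is the set of edges at $v$, $\mathcal B_v=\{z\in\mathbb Z_+^{E_v}: z\le b|_{E_v}\}$, $\mathbf 1^e$ the unit vector of $e$, $|z|=\sum_e|z(e)|$, $\wedge,\vee$ componentwise min/max. Each $v$ has a choice function $C_v:\mathcal B_v\to\mathcal B_v$ with $C_v(z)\le z$ and, for all $z,z'$: (A1) $z\ge z'\ge C_v(z)\Rightarrow C_v(z')=C_v(z)$; (A2) $z\ge z'\Rightarrow C_v(z)\wedge z'\le C_v(z')$; (A3) $z\ge z'\Rightarrow|C_v(z)|\ge|C_v(z')|$. $z$ is acceptable if $C_v(z)=z$; for distinct acceptable $z,z'$, $z'\prec_v z$ iff $C_v(z\vee z')=z$. $x_v$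 = restriction of $x$ to $E_v$. A g-matching is $x\in\mathbb Z_+^E$, $x\le b$, each $x_v$ acceptable; $x\prec_F y$ (distinct) iff $x_f\preceq_f y_f$ for all $f\in F$. $e\in E_v$ is interesting for $v$ under acceptable $z$ if some $z'\in\mathcal B_v$ has $z'(e)>z(e)$, $z'(e')=z(e')$ for $e'\neq e$, $C_v(z')(e)>z(e)$; $e=wf$ is interesting for $v\in\{w,f\}$ under a g-matching $x$ if so under $x_v$, and blocks $x$ if interesting for both endpoints; stable g-matchings (no blocking edge) form a finite lattice under $\prec_F$ with maximum $x^{\max}$. For stable $x$: $U_F^+(x)$ = edges $wf$ interesting for $f$ under $x$; $U_F^-(x)$ = edges $wf$ with $x(wf)>0$ not interesting for $f$ under $x$. For $w\in W$, a legal $w$-pair under $x$ is $(c,a)$ with $c\in U_F^-(x)\cap E_w$, $a\in U_F^+(x)\cap E_w$ and $C_w(x_w+\mathbf 1^a-\mathbf 1^c)=x_w+\mathbf 1^a-\mathbf 1^c$; it is essential if no $d\in(U_F^+(x)\cap E_w)\setminus\{a\}$ is interesting for $w$ under $x_w+\mathbf 1^a-\mathbf 1^c$. *)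

From mathcomp Require Import all_boot.
Set Implicit Arguments. Unset Strict Implicit. Unset Printing Implicit Defensive.

Section GMatch.
(* Bipartite graph: colour classes W and F, edge set E; edge e joins ew e and ef e. *)
Variables (W F E : finType) (ew : E -> W) (ef : E -> F).
Variable b : E -> nat.
(* vertices are W + F; vectors in Z_+^{E_v} are represented as functions E -> nat
   vanishing outside E_v *)
Definition vert := (W + F)%type.
Variable C : vert -> {ffun E -> nat} -> {ffun E -> nat}.

Definition incident (v : vert) (e : E) : bool :=
  match v with inl w => ew e == w | inr f => ef e == f end.

Definition simple_bip : Prop := injective (fun e => (ew e, ef e)).

Definition inB (v : vert) (z : {ffun E -> nat}) : Prop :=
  (forall e, z e <= b e) /\ (forall e, ~~ incident v e -> z e = 0).

Definition vle (z z' : {ffun E -> nat}) : Prop := forall e, z e <= z' e.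
Definition vmin (z z' : {ffun E -> nat}) : {ffun E -> nat} := [ffun e => minn (z e) (z' e)].
Definition vmax (z z' : {ffun E -> nat}) : {ffun E -> nat} := [ffun e => maxn (z e) (z' e)].
Definition vsize (z : {ffun E -> nat}) : nat := \sum_(e : E) z e.

(* C_v : B_v -> B_v, C_v(z) <= z, and axioms (A1)-(A3) *)
Definition choice_axioms : Prop :=
  forall v : vert,
    (forall z, inB v z -> inB v (C v z) /\ vle (C v z) z) /\
    (forall z z', inB v z -> inB v z' -> vle z' z -> vle (C v z) z' ->
        C v z' = C v z) /\
    (forall z z', inB v z -> inB v z' -> vle z' z ->
        vle (vmin (C v z) z') (C v z')) /\
    (forall z z', inB v z -> inB v z' -> vle z' z ->
        vsize (C v z') <= vsize (C v z)).

Definition acceptable (v : vert) (z : {ffun E -> nat}) : Prop :=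
  inB v z /\ C v z = z.

Definition prec (v : vert) (z' z : {ffun E -> nat}) : Prop :=
  acceptable v z /\ acceptable v z' /\ z <> z' /\ C v (vmax z z') = z.
Definition preceq (v : vert) (z' z : {ffun E -> nat}) : Prop :=
  (acceptable v z /\ z' = z) \/ prec v z' z.

Definition restr (v : vert) (x : {ffun E -> nat}) : {ffun E -> nat} :=
  [ffun e => if incident v e then x e else 0].

Definition gmatching (x : {ffun E -> nat}) : Prop :=
  (forall e, x e <= b e) /\ (forall v, acceptable v (restr v x)).

Definition precF (x y : {ffun E -> nat}) : Prop :=
  x <> y /\ forall f : F, preceq (inr f) (restr (inr f) x) (restr (inr f) y).
Definition preceqF (x y : {ffun E -> nat}) : Prop := x = y \/ precF x y.

Definition interesting (v : vert) (z : {ffun E -> nat}) (e : E) : Prop :=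
  incident v e /\
  exists z' : {ffun E -> nat}, inB v z' /\ z e < z' e /\
    (forall e', e' != e -> z' e' = z e') /\ z e < C v z' e.

Definition interesting_at (v : vert) (x : {ffun E -> nat}) (e : E) : Prop :=
  interesting v (restr v x) e.

Definition blocks (x : {ffun E -> nat}) (e : E) : Prop :=
  interesting_at (inl (ew e)) x e /\ interesting_at (inr (ef e)) x e.

Definition stable (x : {ffun E -> nat}) : Prop :=
  gmatching x /\ forall e, ~ blocks x e.

Definition is_max_stable (xm : {ffun E -> nat}) : Prop :=
  stable xm /\ forall y, stable y -> preceqF y xm.

Definition UFplus (x : {ffun E -> nat}) (e : E) : Prop :=
  interesting_at (inr (ef e)) x e.
Definition UFminus (x : {ffun E -> nat}) (e : E) : Prop :=
  0 < x e /\ ~ interesting_at (inr (ef e)) x e.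

(* z + 1^a - 1^c (truncated subtraction; only used with z c > 0) *)
Definition swap (z : {ffun E -> nat}) (a c : E) : {ffun E -> nat} :=
  [ffun e => z e + (e == a) - (e == c)].

(* legal w-pair (c, a) under x, with z in place of x_w *)
Definition legal (x : {ffun E -> nat}) (w : W) (z : {ffun E -> nat}) (c a : E) : Prop :=
  [/\ UFminus x c /\ ew c = w, UFplus x a /\ ew a = w, 0 < z c &
      C (inl w) (swap z a c) = swap z a c].

Definition essential (x : {ffun E -> nat}) (w : W) (z : {ffun E -> nat}) (c a : E) : Prop :=
  legal x w z c a /\
  forall d, UFplus x d -> ew d = w -> d != a ->
    ~ interesting (inl w) (swap z a c) d.

(* z^I = x_w + sum_{i in I} (1^{a i} - 1^{c i}) *)
Definition zI (k : nat) (x : {ffun E -> nat}) (w : W) (c a : 'I_k -> E) (I : {set 'I_k})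
  : {ffun E -> nat} :=
  [ffun e => restr (inl w) x e + #|[set i in I | a i == e]| - #|[set i in I | c i == e]|].

End GMatch.

From mathcomp Require Import all_boot zify.
Set Implicit Arguments. Unset Strict Implicit. Unset Printing Implicit Defensive.

(* Applying (A2) to [T <= max(T, u)], whose choice is [u] when [u] is acceptable
   and no edge on which [T] exceeds [u] is interesting under [u], gives
   [min(u, T) <= C_w(T)].  For [z = z^I] such a [u] exists at every edge:
   [x_w] away from the [a(i)], [i \in I], and [x_w + 1^a(i) - 1^c(i)] at [a(i)],
   by essentiality of [(c(i), a(i))].  Hence [z <= C_w(z)], which is (i).  The
   same bound survives raising [z] at one edge [e] of [U_F^+(x)], while (A3)
   bounds [|C_w|] of the raise by [|x_w| = |z|]; so the choice cannot increase
   at [e], which is (ii).  Finally [z^I + 1^a(j) - 1^c(j) = z^(I + j)], so (iii)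
   is (i) and (ii) for [I + j]. *)

Lemma card_fiber_inj (I T : finType) (f : I -> T) (A : {set I}) (t : T) :
  injective f -> #|[set i in A | f i == t]| = (t \in f @: A).
Proof.
move=> f_inj; case: (boolP (t \in f @: A)) => [/imsetP [i iA ->] | tA].
  suff ->: [set j in A | f j == f i] = [set i] by rewrite cards1.
  apply/setP => j; rewrite !inE; apply/andP/eqP => [[_ /eqP/f_inj //] | ->].
  by rewrite iA eqxx.
apply/eqP; rewrite cards_eq0; apply/eqP/setP => j; rewrite !inE.
by apply/negbTE; apply: contra tA => /andP [jA /eqP <-]; apply: imset_f.
Qed.

Lemma sum_mem_card (T : finType) (A : {set T}) : \sum_(t : T) (t \in A) = #|A|.
Proof. by rewrite -sum1_card [RHS]big_mkcond; apply: eq_bigr => t _; case: (t \in A). Qed.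

Lemma vsize_ltn (E : finType) (z z' : {ffun E -> nat}) (e : E) :
  (forall g, g != e -> z g <= z' g) -> z e < z' e -> vsize z < vsize z'.
Proof.
move=> le_off lt_e; rewrite /vsize (bigD1 e) //= [X in _ < X](bigD1 e) //= -addSn.
by apply: leq_add => //; apply: leq_sum.
Qed.

Section ChoiceAtVertex.
Variables (W F E : finType) (ew : E -> W) (ef : E -> F) (b : E -> nat)
  (C : vert W F -> {ffun E -> nat} -> {ffun E -> nat}).
Hypothesis HC : choice_axioms ew ef b C.
Variable v : vert W F.

Local Notation inBv := (inB ew ef b v).
Local Notation acceptablev := (acceptable ew ef b C v).
Local Notation interestingv := (interesting ew ef b C v).

Lemma choice_le (z : {ffun E -> nat}) : inBv z -> vle (C v z) z.
Proof. by case: (HC v) => H _ /H []. Qed.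

Lemma choice_eq_sub (z z' : {ffun E -> nat}) :
  inBv z -> inBv z' -> vle z' z -> vle (C v z) z' -> C v z' = C v z.
Proof. by case: (HC v) => _ [H _]; apply: H. Qed.

Lemma vmin_choice_le (z z' : {ffun E -> nat}) :
  inBv z -> inBv z' -> vle z' z -> vle (vmin (C v z) z') (C v z').
Proof. by case: (HC v) => _ [_ [H _]]; apply: H. Qed.

Lemma vsize_choice_mono (z z' : {ffun E -> nat}) :
  inBv z -> inBv z' -> vle z' z -> vsize (C v z') <= vsize (C v z).
Proof. by case: (HC v) => _ [_ [_ H]]; apply: H. Qed.

Lemma vmax_inB (z z' : {ffun E -> nat}) : inBv z -> inBv z' -> inBv (vmax z z').
Proof.
move=> [zb z0] [z'b z'0]; split => g; rewrite ffunE; first by rewrite geq_max zb z'b.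
by move=> ng; rewrite z0 // z'0.
Qed.

Lemma vle_maxl (z z' : {ffun E -> nat}) : vle z (vmax z z').
Proof. by move=> g; rewrite ffunE leq_maxl. Qed.

Lemma vle_maxr (z z' : {ffun E -> nat}) : vle z' (vmax z z').
Proof. by move=> g; rewrite ffunE leq_maxr. Qed.

Lemma choice_le_uninteresting (u z : {ffun E -> nat}) (d : E) :
  ~ interestingv u d -> incident ew ef v d -> inBv z -> u d < z d ->
  (forall g, g != d -> z g = u g) -> C v z d <= u d.
Proof.
move=> not_int vd zB lt_d z_off; rewrite leqNgt; apply/negP => lt_Cd.
by apply: not_int; split; last exists z.
Qed.

Lemma choice_raise_uninteresting (u N : {ffun E -> nat}) :
  acceptablev u -> inBv N -> vle u N ->
  (forall d, u d < N d -> ~ interestingv u d) -> C v N = u.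
Proof.
move=> [uB Cu] NB uN not_int.
suff CN_u : vle (C v N) u by rewrite -(choice_eq_sub NB uB uN CN_u).
move=> d; case: (leqP (N d) (u d)) => [Nu | uN_d].
  exact: leq_trans (choice_le NB d) Nu.
have vd : incident ew ef v d.
  by apply/negPn/negP => nd; move: uN_d; rewrite (NB.2 d nd).
pose ud : {ffun E -> nat} := [ffun g => if g == d then N d else u g].
have udB : inBv ud.
  split => g; rewrite ffunE; case: eqP => [-> | _]; [exact: NB.1 | exact: uB.1 | |].
  - by move=> nd; apply: NB.2.
  - by move=> ng; apply: uB.2.
have udN : vle ud N by move=> g; rewrite ffunE; case: eqP => [-> | _].
have Cud_d : C v ud d <= u d.
  apply: choice_le_uninteresting (not_int _ uN_d) vd udB _ _; first by rewrite ffunE eqxx.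
  by move=> g /negPf gd; rewrite ffunE gd.
have := vmin_choice_le NB udB udN d; rewrite !ffunE eqxx => min_le.
have := choice_le NB d; lia.
Qed.

Section Uninteresting.
Variables (u T : {ffun E -> nat}).
Hypotheses (u_acc : acceptablev u) (TB : inBv T)
  (u_lt : forall g, u g < T g -> ~ interestingv u g).

Lemma choice_vmax_uninteresting : C v (vmax T u) = u.
Proof.
apply: choice_raise_uninteresting u_acc (vmax_inB TB u_acc.1) (vle_maxr _ _) _.
by move=> g; rewrite ffunE leq_max ltnn orbF => /u_lt.
Qed.

Lemma vmin_le_choice : vle (vmin u T) (C v T).
Proof.
have := vmin_choice_le (vmax_inB TB u_acc.1) TB (vle_maxl _ _).
by rewrite choice_vmax_uninteresting.
Qed.

Lemma vsize_choice_le : vsize (C v T) <= vsize u.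
Proof.
have := vsize_choice_mono (vmax_inB TB u_acc.1) TB (vle_maxl _ _).
by rewrite choice_vmax_uninteresting.
Qed.

End Uninteresting.

Definition witness (U : E -> Prop) (T : {ffun E -> nat}) (d : E) (u : {ffun E -> nat}) :=
  [/\ acceptablev u, T d <= u d, forall g, u g < T g -> U g &
      forall g, U g -> g != d -> ~ interestingv u g].

Lemma witness_le_choice (U : E -> Prop) (T u : {ffun E -> nat}) (d : E) :
  inBv T -> witness U T d u -> T d <= C v T d.
Proof.
move=> TB [u_acc Tu_d u_lt u_U].
have u_ltT g : u g < T g -> ~ interestingv u g.
  move=> lt_g; apply: u_U (u_lt g lt_g) _.
  by apply: contraTneq lt_g => ->; rewrite -leqNgt.
have := vmin_le_choice u_acc TB u_ltT d; rewrite ffunE; lia.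
Qed.

Lemma witness_raise (U : E -> Prop) (T T' u : {ffun E -> nat}) (d e : E) :
  U e -> e != d -> vle T T' -> (forall g, g != e -> T' g = T g) ->
  witness U T d u -> witness U T' d u.
Proof.
move=> Ue ed TT' T'_off [u_acc Tu_d u_lt u_U]; split => // [|g].
  by rewrite T'_off // eq_sym.
by case: (eqVneq g e) => [-> // | ge]; rewrite T'_off //; apply: u_lt.
Qed.

Lemma acceptable_of_witnesses (U : E -> Prop) (T : {ffun E -> nat}) :
  inBv T -> (forall d, exists u, witness U T d u) -> acceptablev T.
Proof.
move=> TB wit; split => //; apply/ffunP => d; apply/eqP; rewrite eqn_leq choice_le //=.
by have [u] := wit d; apply: witness_le_choice.
Qed.

Lemma uninteresting_of_witnesses (U : E -> Prop) (T u0 : {ffun E -> nat}) :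
  inBv T -> (forall d, exists u, witness U T d u) ->
  acceptablev u0 -> (forall g, u0 g < T g -> U g) -> (forall g, U g -> ~ interestingv u0 g) ->
  vsize u0 <= vsize T -> forall e, U e -> ~ interestingv T e.
Proof.
move=> TB wit u0_acc u0_lt u0_U size_le e Ue [_ [T' [T'B [lt_e [T'_off lt_Ce]]]]].
have TT' : vle T T'.
  by move=> g; case: (eqVneq g e) => [-> | ge]; [exact: ltnW | rewrite T'_off].
have T_le_C g : g != e -> T g <= C v T' g.
  move=> ge; rewrite -T'_off //; have [u wit_g] := wit g.
  by apply: witness_le_choice T'B (witness_raise Ue _ TT' T'_off wit_g); rewrite eq_sym.
have u0_ltT' g : u0 g < T' g -> ~ interestingv u0 g.
  move=> lt_g; apply: u0_U; case: (eqVneq g e) => [-> // | ge].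
  by apply: u0_lt; rewrite -T'_off.
have := vsize_ltn T_le_C lt_Ce; have := vsize_choice_le u0_acc T'B u0_ltT'; lia.
Qed.

End ChoiceAtVertex.

Section EssentialPairs.
Variables (W F E : finType) (ew : E -> W) (ef : E -> F) (b : E -> nat)
  (C : vert W F -> {ffun E -> nat} -> {ffun E -> nat}).
Hypothesis HC : choice_axioms ew ef b C.
Variable x : {ffun E -> nat}.
Hypothesis x_stable : stable ew ef b C x.
Variables (w : W) (k : nat) (c a : 'I_k -> E).
Hypothesis Hdisj : forall i j : 'I_k, i != j -> [/\ c i != c j, c i != a j & a i != a j].
Hypothesis Hess : forall i : 'I_k, essential ew ef b C x w (restr ew ef (inl w) x) (c i) (a i).

Local Notation y := (restr ew ef (inl w) x).
Local Notation U := (UFplus ew ef b C x).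
Local Notation z := (zI ew ef x w c a).
Local Notation acceptablew := (acceptable ew ef b C (inl w)).
Local Notation interestingw := (interesting ew ef b C (inl w)).

Lemma a_inj : injective a.
Proof. by move=> i j /eqP; apply: contraTeq => /Hdisj []. Qed.

Lemma c_inj : injective c.
Proof. by move=> i j /eqP; apply: contraTeq => /Hdisj []. Qed.

Lemma UFplus_a i : U (a i).
Proof. by have [[_ []]] := Hess i. Qed.

Lemma ew_a i : ew (a i) = w.
Proof. by have [[_ []]] := Hess i. Qed.

Lemma y_c_gt0 i : 0 < y (c i).
Proof. by have [[]] := Hess i. Qed.

Lemma c_neq_a i j : c i != a j.
Proof.
have [[[[_ not_Uc] _] _ _ _] _] := Hess i.
by apply/eqP => cij; apply: not_Uc; rewrite cij; apply: UFplus_a.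
Qed.

Lemma c_notin_a_imset (I : {set 'I_k}) j : (c j \in a @: I) = false.
Proof. by apply/negbTE/imsetP => [[i _ /eqP]]; rewrite (negPf (c_neq_a j i)). Qed.

Lemma a_notin_c_imset (I : {set 'I_k}) j : (a j \in c @: I) = false.
Proof. by apply/negbTE/imsetP => [[i _ /esym/eqP]]; rewrite (negPf (c_neq_a i j)). Qed.

Lemma zIE (I : {set 'I_k}) d : z I d = y d + (d \in a @: I) - (d \in c @: I).
Proof. by rewrite ffunE !card_fiber_inj //; [apply: c_inj | apply: a_inj]. Qed.

Lemma mem_c_imset_le (I : {set 'I_k}) d : (d \in c @: I) <= y d.
Proof. by case: (boolP (d \in c @: I)) => [/imsetP [i _ ->] | //]; apply: y_c_gt0. Qed.

Lemma y_acceptable : acceptablew y.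
Proof. by have [[_]] := x_stable. Qed.

Lemma y_uninteresting d : U d -> ~ interestingw y d.
Proof.
move=> Ud int_d; have [_ /(_ d)] := x_stable; apply; split => //.
by have /= /eqP -> := int_d.1.
Qed.

Lemma UFplus_lt_cap d : U d -> x d < b d.
Proof.
move=> [_ [z' [z'B [+ _]]]]; rewrite ffunE /= eqxx => /leq_trans; apply.
exact: z'B.1.
Qed.

Lemma swap_acceptable i : acceptablew (swap y (a i) (c i)).
Proof.
have [[_ _ _ C_swap] _] := Hess i; split => //; split => d; rewrite ffunE.
  case: (eqVneq d (a i)) => [-> | _]; last by have := y_acceptable.1.1 d; lia.
  by have := UFplus_lt_cap (UFplus_a i); rewrite ffunE /= ew_a eqxx; lia.
move=> nd; rewrite (y_acceptable.1.2 d nd); case: eqP => // da.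
by move: nd; rewrite da /= ew_a eqxx.
Qed.

Lemma swap_uninteresting i d : U d -> d != a i -> ~ interestingw (swap y (a i) (c i)) d.
Proof.
move=> Ud da int_d; have [_ /(_ d Ud) not_int] := Hess i.
have /= /eqP ew_d := int_d.1; exact: not_int ew_d da int_d.
Qed.

Lemma zI_inB (I : {set 'I_k}) : inB ew ef b (inl w) (z I).
Proof.
split => d; rewrite zIE; case: (boolP (d \in a @: I)) => [/imsetP [i _ ->] | _].
- by have := UFplus_lt_cap (UFplus_a i); rewrite ffunE /= ew_a eqxx; lia.
- by have := y_acceptable.1.1 d; lia.
- by rewrite /= ew_a eqxx.
- by move=> nd; rewrite (y_acceptable.1.2 d nd).
Qed.

Lemma zI_gt_UFplus (I : {set 'I_k}) g : y g < z I g -> U g.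
Proof.
rewrite zIE; case: (boolP (g \in a @: I)) => [/imsetP [i _ ->] _ | _]; last lia.
exact: UFplus_a.
Qed.

Lemma vsize_zI (I : {set 'I_k}) : vsize (z I) = vsize y.
Proof.
have sums : \sum_d (z I d + (d \in c @: I)) = \sum_d (y d + (d \in a @: I)).
  by apply: eq_bigr => d _; rewrite zIE subnK // (leq_trans (mem_c_imset_le I d)) ?leq_addr.
move: sums; rewrite !big_split /= !sum_mem_card !card_imset; last exact: c_inj; last exact: a_inj.
by move/addIn.
Qed.

Lemma zI_witness (I : {set 'I_k}) d : exists u, witness ew ef b C (inl w) U (z I) d u.
Proof.
case: (boolP (d \in a @: I)) => [/imsetP [i iI ->] | d_notin].
  exists (swap y (a i) (c i)); split.
  - exact: swap_acceptable.
  - rewrite zIE a_notin_c_imset mem_imset ?iI; last exact: a_inj.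
    by rewrite [swap _ _ _ _]ffunE /= eqxx eq_sym (negPf (c_neq_a i i)).
  - move=> g; rewrite [swap _ _ _ _]ffunE /=; case: (eqVneq g (c i)) => [-> | gc].
      rewrite zIE c_notin_a_imset mem_imset ?iI; last exact: c_inj.
      by rewrite (negPf (c_neq_a i i)) ltnn.
    by move=> lt_g; apply: (zI_gt_UFplus (I := I)); lia.
  - exact: swap_uninteresting.
exists y; split => [||| g Ug _]; first exact: y_acceptable.
- by rewrite zIE (negPf d_notin) addn0 leq_subr.
- exact: zI_gt_UFplus.
- exact: y_uninteresting Ug.
Qed.

Lemma zI_acceptable (I : {set 'I_k}) : acceptablew (z I).
Proof. exact: (acceptable_of_witnesses HC (zI_inB I) (zI_witness I)). Qed.

Lemma zI_uninteresting (I : {set 'I_k}) e : U e -> ~ interestingw (z I) e.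
Proof.
have size_le : vsize y <= vsize (z I) by rewrite vsize_zI.
exact: (uninteresting_of_witnesses HC (zI_inB I) (zI_witness I) y_acceptable
  (@zI_gt_UFplus I) y_uninteresting size_le).
Qed.

Lemma zI_c_gt0 (I : {set 'I_k}) j : j \notin I -> 0 < z I (c j).
Proof.
move=> jI; rewrite zIE c_notin_a_imset mem_imset ?(negPf jI); last exact: c_inj.
by rewrite addn0 subn0 y_c_gt0.
Qed.

Lemma swap_zI (I : {set 'I_k}) j : j \notin I -> swap (z I) (a j) (c j) = z (j |: I).
Proof.
move=> jI; apply/ffunP => d; rewrite ffunE !zIE !imsetU1 !in_setU1.
case: (eqVneq d (c j)) => [-> | dc].
  rewrite (negPf (c_neq_a j j)) c_notin_a_imset mem_imset ?(negPf jI) //; last exact: c_inj.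
  by have := y_c_gt0 j; lia.
case: (eqVneq d (a j)) => [-> | da]; last by rewrite !subn0 !addn0.
by rewrite a_notin_c_imset mem_imset ?(negPf jI) //; [lia | apply: a_inj].
Qed.

End EssentialPairs.

Theorem corollary3p8 (W F E : finType) (ew : E -> W) (ef : E -> F) (b : E -> nat)
  (C : vert W F -> {ffun E -> nat} -> {ffun E -> nat})
  (Hsimple : simple_bip ew ef)
  (HC : choice_axioms ew ef b C)
  (x xmax : {ffun E -> nat})
  (Hx : stable ew ef b C x)
  (Hxmax : is_max_stable ew ef b C xmax)
  (Hneq : x <> xmax)
  (w : W) (k : nat) (c a : 'I_k -> E)
  (Hdisj : forall i j : 'I_k, i != j ->
     [/\ c i != c j, c i != a j & a i != a j])
  (Hess : forall i : 'I_k, essential ew ef b C x w (restr ew ef (inl w) x) (c i) (a i))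
  (I : {set 'I_k}) :
  let z := zI ew ef x w c a I in
  [/\ acceptable ew ef b C (inl w) z,
      (forall e, UFplus ew ef b C x e -> ~ interesting ew ef b C (inl w) z e) &
      (forall j : 'I_k, j \notin I -> essential ew ef b C x w z (c j) (a j))].
Proof.
have acc J := zI_acceptable HC Hx Hdisj Hess J.
have unint J := zI_uninteresting HC Hx Hdisj Hess J.
move=> z; split; [exact: acc | move=> e; exact: unint | move=> j jI].
have [[c_minus a_plus _ _] _] := Hess j.
split; first split => //.
- exact: (zI_c_gt0 Hdisj Hess).
- by rewrite (swap_zI Hdisj Hess) //; apply: (acc _).2.
- by move=> d Ud _ _; rewrite (swap_zI Hdisj Hess) //; apply: unint.
Qed.
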